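(* Let $A$ be a DFA over a finite alphabet $\Sigma$ and let $S=s_1,\ldots,s_l$ be any non-empty sequence of strings $s_i\in\Sigma^*$. For any execution of prefix-free IDS on $S$ (with teacher $A$) there exists an execution of ID on the input set $\{\lambda,s_1,\ldots,s_l\}$ (with teacher $A$) such that for all $m\ge 0$: (i) for all $n\ge0$, if $K(n)=m$ then (a) for all $0\le j\le n$, $v_j^{IDS}=v_j^{ID}$; (b) for all $0\le j<n$, $v_n^{IDS}\neq v_j^{IDS}$; (c) for all $\alpha\in T_m^{IDS}$, $E_n^{IDS}(\alpha)=\{v_j^{IDS}: 0\le j\le n,\ \alpha v_j^{IDS}\in L(A)\}$; (ii) if $m>0$, letting $p$ be the greatest integer with $K(p)=m-1$, then for all $\alpha\in T_m^{IDS}$, $E_p^{IDS}(\alpha)=\{v_j^{IDS}:0\le j\le p,\ \alpha v_j^{IDS}\in L(A)\}$; (iii) the $m$-th partition refinement of IDS (the run of the refinement procedure while $k=m$) terminates.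
   Context: Let $A=\langle\Sigma,Q,F,q_0,\delta\rangle$ be a DFA with finite alphabet $\Sigma$ and language $L(A)$; $\lambda$ is the empty string. Membership queries ''is $w\in L(A)$?'' are answered correctly. Let $d_0$ be a fresh symbol not in $\Sigma^*$; $f(d_0,b)=d_0$ and $f(\alpha,b)=\alpha b$ for $\alpha\in\Sigma^*$. $U\oplus V=(U-V)\cup(V-U)$. Refinement procedure with respect to a finite set $P'$ (containing $d_0$) and a finite set $T\subseteq\Sigma^*$: while there exist $\alpha,\beta\in P'$ and $b\in\Sigma$ with $E_i(\alpha)=E_i(\beta)$ but $E_i(f(\alpha,b))\neq E_i(f(\beta,b))$: choose (nondeterministically) such $\alpha,\beta,b$ and some $\gamma\in E_i(f(\alpha,b))\oplus E_i(f(\beta,b))$, set $v_{i+1}=b\gamma$, increase $i$ by one, and for each $\alpha'\in T$ set $E_i(\alpha')=E_{i-1}(\alpha')\cup\{v_i\}$ if $\alpha' v_i\in L(A)$, else $E_i(\alpha')=E_{i-1}(\alpha')$. Always $E_i(d_0)=\emptyset$. ID algorithm (input: finite $P\subseteq\Sigma^*$): $P'=P\cup\{d_0\}$, $T=P\cup\{\alpha b:\alpha\in P,b\in\Sigma\}$, $i=0$, $v_0=\lambda$, $E_0(\alpha)=\{\lambda\}$ if $\alpha\in L(A)$ else $\emptyset$ for $\alpha\in T$; then run the refinement procedure w.r.t. $P'$ and $T$ (and then build a hypothesis automaton from the resulting sets). The values of its variables are denoted $v_j^{ID}$, $E_n^{ID}(\alpha)$. Prefix-free IDS algorithm (input: sequence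 $S=s_1,\ldots,s_l$): initialize $i=k=t=0$, $v_0=\lambda$, $P_0=\{\lambda\}$, $T_0=\{\lambda\}\cup\Sigma$, $E_0(\alpha)=\{\lambda\}$ if $\alpha\in L(A)$ else $\emptyset$ for $\alpha\in T_0$; run the refinement procedure w.r.t. $P'_0=P_0\cup\{d_0\}$ and $T_0$ and build hypothesis $M_0$. Then for each string $\alpha$ of $S$ in order: increase $k,t$ by one; $P_k=P_{k-1}\cup\{\alpha\}$, $P'_k=P_k\cup\{d_0\}$, $T_k=T_{k-1}\cup\{\alpha\}\cup\{\alpha b:b\in\Sigma\}$; for each $\beta\in T_k-T_{k-1}$ set $E_i(\beta)=\{v_j:0\le j\le i,\ \beta v_j\in L(A)\}$; run the refinement procedure w.r.t. $P'_k$ and $T_k$ (this is the $k$-th partition refinement); then produce hypothesis $M_t$ (equal to $M_{t-1}$ if $M_{t-1}$ classifies $\alpha$ correctly, otherwise newly constructed from the current sets $E_i$). Values of its variables are denoted $v_j^{IDS}$, $E_n^{IDS}(\alpha)$, $T_m^{IDS}$ (where $E_n^{IDS}(\alpha)$ is the value assigned to $E_i(\alpha)$ while $i=n$). Re-indexing function: $K=K^S:\mathbb N\to\mathbb N$ is the unique monotonically increasing function such that for each $n$, $K(n)$ is the least integer $m$ such that the variable $k$ of IDS has value $m$ while the variable $i$ has value $n$ (so $K(0)=0$). *)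

From mathcomp Require Import all_boot.
Set Implicit Arguments.
Unset Strict Implicit.
Unset Printing Implicit Defensive.

Record dfa (Sigma : finType) := DFA {
  dstate : finType;
  q0 : dstate;
  dfinal : pred dstate;
  delta : dstate -> Sigma -> dstate }.

(* L(A): strings are [seq Sigma], lambda = [::], concatenation = ++ *)
Definition accepts (Sigma : finType) (A : dfa Sigma) (w : seq Sigma) : bool :=
  @dfinal _ A (foldl (@delta _ A) (@q0 _ A) w).

Section Algo.
Variable Sigma : finType.
Notation str := (seq Sigma).
(* membership oracle: L w answers "is w in L(A)?" *)
Variable L : pred str.

(* A snapshot of the variables of the algorithms.
   k_ : the variable k;  i_ : the variable i;
   vs_ : [:: v_0; ...; v_i];  P_ : the current P (P_k for IDS);
   T_ : the current T;  E_ a : the current value of E_i(a) (for a in T). *)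
Record state := St {
  k_ : nat; i_ : nat; vs_ : seq str; P_ : seq str; T_ : seq str;
  E_ : str -> seq str }.

(* d_0 is None; strings alpha are Some alpha *)
Definition Pd (P : seq str) : seq (option str) := None :: map Some P.
Definition fext (x : option str) (b : Sigma) : option str :=
  omap (fun a => rcons a b) x.
Definition Eopt (E : str -> seq str) (x : option str) : seq str :=
  if x is Some a then E a else [::].   (* E_i(d_0) = empty *)

(* the while-condition of the refinement procedure (sets compared
   extensionally, =i) *)
Definition rcond (s : state) : Prop :=
  exists (a c : option str) (b : Sigma),
    a \in Pd (P_ s) /\ c \in Pd (P_ s) /\
    Eopt (E_ s) a =i Eopt (E_ s) c /\
    ~ (Eopt (E_ s) (fext a b) =i Eopt (E_ s) (fext c b)).

(* one iteration of the refinement loop (nondeterministic choice of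
   alpha, beta, b and gamma in the symmetric difference) *)
Definition rstep (s s' : state) : Prop :=
  exists (a c : option str) (b : Sigma) (g : str),
    a \in Pd (P_ s) /\ c \in Pd (P_ s) /\
        Eopt (E_ s) a =i Eopt (E_ s) c /\
        ~ (Eopt (E_ s) (fext a b) =i Eopt (E_ s) (fext c b)) /\
        (g \in Eopt (E_ s) (fext a b)) != (g \in Eopt (E_ s) (fext c b)) /\
        s' = St (k_ s) (i_ s).+1 (rcons (vs_ s) (b :: g)) (P_ s) (T_ s)
               (fun a' => if (a' \in T_ s) && L (a' ++ (b :: g))
                          then rcons (E_ s a') (b :: g) else E_ s a').

Definition E0 (a : str) : seq str := if L a then [:: [::]] else [::].

Definition id_init (P : seq str) : state :=
  St 0 0 [:: [::]] P (P ++ [seq rcons a b | a <- P, b <- enum Sigma]) E0.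

(* an execution (maximal run, stuttering once the loop has exited) *)
Definition ID_exec (P : seq str) (tau : nat -> state) : Prop :=
  tau 0 = id_init P /\
  forall t, rstep (tau t) (tau t.+1) \/ (~ rcond (tau t) /\ tau t.+1 = tau t).

Definition ids_init : state :=
  St 0 0 [:: [::]] [:: [::]] ([::] :: [seq [:: b] | b <- enum Sigma]) E0.

(* processing the next string alpha = s_{k+1} of S *)
Definition ids_add (S : seq str) (s : state) : state :=
  let a := nth [::] S (k_ s) in
  let nw := a :: [seq rcons a b | b <- enum Sigma] in
  St (k_ s).+1 (i_ s) (vs_ s) (rcons (P_ s) a) (T_ s ++ nw)
     (fun c => if (c \in nw) && (c \notin T_ s)
               then [seq v <- vs_ s | L (c ++ v)] else E_ s c).

Definition ids_step (S : seq str) (s s' : state) : Prop :=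
  rstep s s' \/ (~ rcond s /\ k_ s < size S /\ s' = ids_add S s).

Definition ids_final (S : seq str) (s : state) : Prop :=
  ~ rcond s /\ k_ s = size S.

Definition IDS_exec (S : seq str) (sigma : nat -> state) : Prop :=
  sigma 0 = ids_init /\
  forall t, ids_step S (sigma t) (sigma t.+1) \/
            (ids_final S (sigma t) /\ sigma t.+1 = sigma t).

(* K(n) = m : m is the least value of k while i has value n *)
Definition Kis (sigma : nat -> state) (n m : nat) : Prop :=
  (exists t, i_ (sigma t) = n /\ k_ (sigma t) = m) /\
  (forall t, i_ (sigma t) = n -> m <= k_ (sigma t)).

Definition accV (vs : seq str) (n : nat) (a : str) : seq str :=
  [seq v <- take n.+1 vs | L (a ++ v)].

End Algo.

(* Both algorithms maintain the invariant [coherent]: the suffixes v_0, ..., v_i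
   are distinct and every E_i(alpha) is {v_j | alpha v_j in L}.  For IDS this
   holds at every moment, since the sets E of newly added strings are computed
   from all current v_j; this gives (i)(b), (i)(c) and (ii).  Under the
   invariant a refinement step adds a suffix separating two rows of P' that
   agreed, so the number of distinct rows of P' grows while P' stays fixed; as
   it is at most |P'|, every partition refinement terminates, which is (iii).
   Finally the suffixes chosen by IDS form one chain under the prefix order, and
   each of its steps is also a legal step of ID on {lambda} u S, because P_k is
   contained in that set and the choice only depends on P and the v_j.  So an
   ID run can copy the chain and then continue on its own, which gives (i)(a). *)

From Stdlib Require Import Classical ClassicalEpsilon.
From mathcomp Require Import all_boot.
Set Implicit Arguments. Unset Strict Implicit. Unset Printing Implicit Defensive.

Lemma prefix_of_comparable (T : eqType) (p q : seq T) :
  prefix p q || prefix q p -> size p <= size q -> prefix p q.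
Proof.
case/orP=> // qp pq.
have Epq : size p = size q by apply/eqP; rewrite eqn_leq pq size_prefix.
by move: qp; rewrite prefixE -Epq take_size => /eqP ->; apply: prefix_refl.
Qed.

Lemma size_undup_map_factor_lt (X Y Z : eqType) (s : seq X)
    (f : X -> Y) (f' : X -> Z) (g : Z -> Y) (a c : X) :
  {in s, forall x, g (f' x) = f x} -> a \in s -> c \in s ->
  f a = f c -> f' a != f' c ->
  size (undup (map f s)) < size (undup (map f' s)).
Proof.
move=> fg ains cins fac f'ac; set U := undup (map f' s).
have memU x : x \in s -> f' x \in U by move=> xs; rewrite mem_undup map_f.
have remU x : x \in s -> f' x != f' c -> f' x \in rem (f' c) U.
  by move=> xs xc; rewrite (mem_rem_uniq _ (undup_uniq _)) inE xc memU.
have sub : {subset undup (map f s) <= map g (rem (f' c) U)}.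
  move=> y; rewrite mem_undup => /mapP [x xs ->].
  have [xc|xc] := eqVneq (f' x) (f' c); last by rewrite -fg // map_f ?remU.
  by rewrite -fg // xc fg // -fac -fg // map_f ?remU.
apply: leq_ltn_trans (uniq_leq_size (undup_uniq _) sub) _.
have U0 : 0 < size U by case: (U) (memU c cins).
by rewrite size_map size_rem ?memU // ltn_predL.
Qed.

Section Refinement.
Variables (Sigma : finType) (L : pred (seq Sigma)).
Notation str := (seq Sigma).

Definition Lopt (x : option str) (v : str) : bool :=
  if x is Some a then L (a ++ v) else false.

Definition row (vs : seq str) (x : option str) : seq bool := map (Lopt x) vs.

Definition nrows (P vs : seq str) : nat := size (undup (map (row vs) (Pd P))).

Lemma nrows_le P vs : nrows P vs <= (size P).+1.
Proof. by rewrite (leq_trans (size_undup _)) // size_map /= size_map. Qed.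

Lemma mem_Pd (P : seq str) a : (Some a \in Pd P) = (a \in P).
Proof. by rewrite inE /= (mem_map (@Some_inj _)). Qed.

Lemma mem_Pd_subset (P P' : seq str) x :
  {subset P <= P'} -> x \in Pd P -> x \in Pd P'.
Proof. by move=> PP'; case: x => // a; rewrite !mem_Pd => /PP'. Qed.

(* The loop may choose alpha = a, beta = c, the letter b and gamma = g, with
   E_i computed from the suffixes vs. *)
Definition splits (P vs : seq str) (a c : option str) (b : Sigma) (g : str) :=
  [&& a \in Pd P, c \in Pd P, row vs a == row vs c, g \in vs &
      Lopt a (b :: g) != Lopt c (b :: g)].

Lemma splits_subset P P' vs a c b g :
  {subset P <= P'} -> splits P vs a c b g -> splits P' vs a c b g.
Proof.
by move=> PP' /and5P [aP cP *]; apply/and5P; split; rewrite ?(mem_Pd_subset PP').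
Qed.

Lemma splits_fresh P vs a c b g : splits P vs a c b g -> b :: g \notin vs.
Proof.
case/and5P => _ _ /eqP /eq_in_map Eac _ Dac.
by apply/negP => /Eac Eg; rewrite Eg eqxx in Dac.
Qed.

Lemma splits_nrows P vs a c b g :
  splits P vs a c b g -> nrows P vs < nrows P (rcons vs (b :: g)).
Proof.
case/and5P => aP cP /eqP Eac _ Dac.
apply: (size_undup_map_factor_lt (g := take (size vs))) aP cP Eac _.
  by move=> x _; rewrite /row map_rcons -cats1 take_size_cat ?size_map.
by rewrite /row !map_rcons; apply: contra Dac => /eqP /rcons_inj [_ ->].
Qed.

Definition refine (s : state Sigma) (v : str) : state Sigma :=
  St (k_ s) (i_ s).+1 (rcons (vs_ s) v) (P_ s) (T_ s)
     (fun a => if (a \in T_ s) && L (a ++ v) then rcons (E_ s a) v else E_ s a).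

Definition coherent (s : state Sigma) : Prop :=
  [/\ size (vs_ s) = (i_ s).+1, uniq (vs_ s), {subset P_ s <= T_ s},
      (forall a b, a \in P_ s -> rcons a b \in T_ s) &
      forall a, a \in T_ s -> E_ s a =i [seq v <- vs_ s | L (a ++ v)]].

Lemma coherent_mem_Eopt s x w : coherent s -> x \in Pd (P_ s) ->
  (w \in Eopt (E_ s) x) = (w \in vs_ s) && Lopt x w.
Proof.
case=> _ _ PT _ ET; case: x => [a|] //= aP; last by rewrite andbF.
by rewrite mem_Pd in aP; rewrite ET ?PT // mem_filter andbC.
Qed.

Lemma coherent_mem_Eopt_fext s x b w : coherent s -> x \in Pd (P_ s) ->
  (w \in Eopt (E_ s) (fext x b)) = (w \in vs_ s) && Lopt x (b :: w).
Proof.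
case=> _ _ _ PbT ET; case: x => [a|] //= aP; last by rewrite andbF.
by rewrite mem_Pd in aP; rewrite ET ?PbT // mem_filter cat_rcons andbC.
Qed.

Lemma coherent_eq_Eopt s x y : coherent s -> x \in Pd (P_ s) -> y \in Pd (P_ s) ->
  Eopt (E_ s) x =i Eopt (E_ s) y <-> row (vs_ s) x = row (vs_ s) y.
Proof.
move=> Cs xP yP; split=> [Exy | /eq_in_map Exy w].
  apply/eq_in_map => w wv.
  by have := Exy w; rewrite !(coherent_mem_Eopt _ Cs) // wv.
rewrite !(coherent_mem_Eopt _ Cs) //.
by case: (boolP (w \in vs_ s)) => // /Exy ->.
Qed.

Lemma coherent_refine s v : coherent s -> v \notin vs_ s -> coherent (refine s v).
Proof.
case=> size_vs uniq_vs PT PbT ET vF; split=> //=; first by rewrite size_rcons size_vs.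
  by rewrite rcons_uniq vF.
move=> a aT w; rewrite aT filter_rcons /=.
by case: (L (a ++ v)); rewrite ?mem_rcons ?inE ET.
Qed.

Lemma rstep_splits s s' : coherent s ->
  rstep L s s' <->
  exists a c b g, splits (P_ s) (vs_ s) a c b g /\ s' = refine s (b :: g).
Proof.
move=> Cs; split.
  case=> a [c [b [g [aP [cP [Eac [_ [Dg ->]]]]]]]]; exists a, c, b, g; split=> //.
  move: Dg; rewrite !(coherent_mem_Eopt_fext _ _ Cs) //.
  case gv: (g \in vs_ s) => //= Dg; rewrite /splits aP cP gv Dg !andbT.
  exact/eqP/(coherent_eq_Eopt Cs aP cP).
case=> a [c [b [g [/and5P [aP cP /eqP Eac gv Dg] ->]]]].
exists a, c, b, g; do 2 split=> //; split; first exact/(coherent_eq_Eopt Cs aP cP).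
have Dgv : (g \in Eopt (E_ s) (fext a b)) != (g \in Eopt (E_ s) (fext c b)).
  by rewrite !(coherent_mem_Eopt_fext _ _ Cs) // gv.
split; first by move=> /(_ g) Eg; rewrite Eg eqxx in Dgv.
by split.
Qed.

Lemma rcond_splits s : coherent s -> rcond s ->
  exists a c b g, splits (P_ s) (vs_ s) a c b g.
Proof.
move=> Cs [a [c [b [aP [cP [Eac Dac]]]]]].
have : ~~ all (fun g => Lopt a (b :: g) == Lopt c (b :: g)) (vs_ s).
  apply/negP => /allP Eg; apply: Dac => w.
  rewrite !(coherent_mem_Eopt_fext _ _ Cs) //.
  by case: (boolP (w \in vs_ s)) => // /Eg /eqP ->.
case/allPn => g gv Dg; exists a, c, b, g.
by rewrite /splits aP cP gv Dg !andbT; exact/eqP/(coherent_eq_Eopt Cs aP cP).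
Qed.

Lemma coherent_rstep s s' : coherent s -> rstep L s s' -> coherent s'.
Proof.
move=> Cs /(rstep_splits _ Cs) [a [c [b [g [Sp ->]]]]].
exact: coherent_refine Cs (splits_fresh Sp).
Qed.

Lemma rstep_nrows s s' : coherent s -> rstep L s s' ->
  nrows (P_ s) (vs_ s) < nrows (P_ s') (vs_ s').
Proof.
by move=> Cs /(rstep_splits _ Cs) [a [c [b [g [Sp ->]]]]]; apply: splits_nrows Sp.
Qed.

Lemma rstep_refine s s' : rstep L s s' -> exists v, s' = refine s v.
Proof. by case=> a [c [b [g [_ [_ [_ [_ [_ ->]]]]]]]]; exists (b :: g). Qed.

Lemma coherent_id_init P : coherent (id_init L P).
Proof.
split=> //=.
- by move=> a aP; rewrite mem_cat aP.
- by move=> a b aP; rewrite mem_cat allpairs_f ?orbT // mem_enum.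
- by move=> a _ w; rewrite /E0 cats0; case: (L a).
Qed.

Lemma coherent_ids_init : coherent (ids_init L).
Proof.
split=> //=.
- by move=> a; rewrite inE => /eqP ->; rewrite inE eqxx.
- by move=> a b; rewrite inE => /eqP ->; rewrite inE map_f ?orbT // mem_enum.
- by move=> a _ w; rewrite /E0 cats0; case: (L a).
Qed.

Lemma coherent_ids_add S s : coherent s -> coherent (ids_add L S s).
Proof.
case=> size_vs uniq_vs PT PbT ET; split=> //=.
- move=> a; rewrite mem_rcons inE mem_cat => /orP [/eqP ->|/PT -> //].
  by rewrite inE eqxx orbT.
- move=> a b; rewrite mem_rcons inE mem_cat => /orP [/eqP ->|/PbT -> //].
  by rewrite inE map_f ?orbT // mem_enum.
- move=> c cT; case: ifP => // nwT; apply: ET.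
  by move: cT nwT; rewrite mem_cat; case: (c \in T_ s) => //= ->.
Qed.

Lemma coherent_accV s : coherent s -> forall a, a \in T_ s ->
  E_ s a =i accV L (vs_ s) (i_ s) a.
Proof. by case=> size_vs _ _ _ ET a aT; rewrite /accV -size_vs take_size; apply: ET. Qed.

Lemma coherent_nth_neq s : coherent s -> forall j, j < i_ s ->
  nth [::] (vs_ s) (i_ s) != nth [::] (vs_ s) j.
Proof.
case=> size_vs uniq_vs _ _ _ j ji.
by rewrite nth_uniq ?size_vs // ?(gtn_eqF ji) // ltnW.
Qed.

End Refinement.

Section IDSRun.
Variables (Sigma : finType) (L : pred (seq Sigma)) (S : seq (seq Sigma))
  (sigma : nat -> state Sigma).
Hypothesis sigma_exec : IDS_exec L S sigma.
Notation V t := (vs_ (sigma t)).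

Lemma sigma_invariant t : coherent L (sigma t) /\ {subset P_ (sigma t) <= [::] :: S}.
Proof.
case: sigma_exec => sigma0 sigmaS; elim: t => [|t [Ct PS]].
  rewrite sigma0; split; first exact: coherent_ids_init.
  by move=> a; rewrite inE => /eqP ->; rewrite inE eqxx.
case: (sigmaS t) => [[R|[_ [kS ->]]]|[_ ->]] //.
- split; first exact: coherent_rstep Ct R.
  by have [v ->] := rstep_refine R.
- split; first exact: coherent_ids_add.
  move=> a /=; rewrite mem_rcons inE => /orP [/eqP ->|/PS //].
  by rewrite inE mem_nth ?orbT.
Qed.

Lemma sigma_rstep_or_halt t : rstep L (sigma t) (sigma t.+1) \/ ~ rcond (sigma t).
Proof. by case: sigma_exec => _ /(_ t) [[|[]]|[[]]]; [left|right|right]. Qed.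

Lemma V_step t : V t.+1 = V t \/ rstep L (sigma t) (sigma t.+1).
Proof. by case: sigma_exec => _ /(_ t) [[|[_ [_ ->]]]|[_ ->]]; [right|left|left]. Qed.

Lemma V0 : V 0 = [:: [::]].
Proof. by case: sigma_exec => ->. Qed.

Lemma prefix_V u w : u <= w -> prefix (V u) (V w).
Proof.
elim: w => [|w IH]; first by rewrite leqn0 => /eqP ->; apply: prefix_refl.
rewrite leq_eqVlt => /orP [/eqP ->|/IH uw]; first exact: prefix_refl.
apply: prefix_trans uw _; case: (V_step w) => [->|/rstep_refine [v ->]].
  exact: prefix_refl.
exact: prefix_rcons.
Qed.

Lemma V_comparable u w : prefix (V u) (V w) || prefix (V w) (V u).
Proof. by case: (leqP u w) => [/prefix_V ->|/ltnW /prefix_V ->]; rewrite ?orbT. Qed.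

Lemma V_history u p : prefix p (V u) -> 0 < size p < size (V u) ->
  exists u', V u' = p /\ rstep L (sigma u') (sigma u'.+1).
Proof.
elim: u => [|u IH]; first by rewrite V0; case: (size p).
case: (V_step u) => [->|R]; first exact: IH.
have [v Ev] := rstep_refine R; rewrite Ev /= => pV /andP [p0].
rewrite size_rcons ltnS leq_eqVlt => /orP [/eqP Ep|pu].
  exists u; split=> //.
  by move: pV; rewrite prefixE Ep -cats1 take_size_cat // => /eqP.
apply: IH; last by rewrite p0.
by move: pV; rewrite !prefixE -cats1 takel_cat // ltnW.
Qed.

Lemma refinement_progress N t0 :
  (exists t, k_ (sigma t) = k_ (sigma t0) /\ ~ rcond (sigma t)) \/
  [/\ nrows L (P_ (sigma t0)) (V t0) + N <= nrows L (P_ (sigma (t0 + N))) (V (t0 + N)),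
      k_ (sigma (t0 + N)) = k_ (sigma t0) & P_ (sigma (t0 + N)) = P_ (sigma t0)].
Proof.
elim: N => [|N [|[grow kN PN]]]; [by right; rewrite !addn0 | by left |].
case: (sigma_rstep_or_halt (t0 + N)) => [R|halt]; last by left; exists (t0 + N).
have [v Ev] := rstep_refine R.
have lt_rows := rstep_nrows (sigma_invariant (t0 + N)).1 R.
rewrite Ev /= in lt_rows; right; rewrite (addnS t0) Ev /= kN PN; split=> //.
by rewrite PN in grow lt_rows; rewrite addnS (leq_ltn_trans grow lt_rows).
Qed.

Lemma refinement_terminates m : (exists t, k_ (sigma t) = m) ->
  exists t, k_ (sigma t) = m /\ ~ rcond (sigma t).
Proof.
case=> t0 <-; set N := (size (P_ (sigma t0))).+2.
case: (refinement_progress N t0) => // [[grow _ PN]].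
have := leq_trans grow (nrows_le _ _ _); rewrite PN.
by rewrite addnS ltnNge leq_addl.
Qed.

Definition tracks (s : state Sigma) : Prop :=
  [/\ coherent L s, {subset [::] :: S <= P_ s} &
      forall u, prefix (vs_ s) (V u) || prefix (V u) (vs_ s)].

Lemma tracks_rstep s s' : tracks s -> rstep L s s' ->
  (forall u, prefix (vs_ s') (V u) || prefix (V u) (vs_ s')) -> tracks s'.
Proof.
case=> Cs Ps _ R cmp; split=> //; first exact: coherent_rstep Cs R.
by have [v ->] := rstep_refine R.
Qed.

Lemma rstep_mirror s u : tracks s -> vs_ s = V u ->
  rstep L (sigma u) (sigma u.+1) -> exists s', rstep L s s' /\ vs_ s' = V u.+1.
Proof.
case=> Cs Ps _ Esu R; have [Cu Pu] := sigma_invariant u.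
have [a [c [b [g [Sp ->]]]]] := (rstep_splits _ Cu).1 R.
exists (refine L s (b :: g)); split; last by rewrite /= Esu.
apply/(rstep_splits _ Cs); exists a, c, b, g; split=> //.
by rewrite Esu; apply: splits_subset Sp => x /Pu /Ps.
Qed.

Lemma follow_ids s u : tracks s -> size (vs_ s) < size (V u) ->
  exists s', [/\ rstep L s s', tracks s' &
    forall w, size (vs_ s) < size (V w) -> vs_ s' = take (size (vs_ s)).+1 (V w)].
Proof.
move=> Ts lt_su; have [[size_vs _ _ _ _] _ cmp] := Ts.
have [u' [Eu' R]] : exists u', V u' = vs_ s /\ rstep L (sigma u') (sigma u'.+1).
  apply: V_history (prefix_of_comparable (cmp u) (ltnW lt_su)) _.
  by rewrite lt_su size_vs.
have [s' [R' Es']] := rstep_mirror Ts (esym Eu') R.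
have [v Ev] := rstep_refine R.
have size_s' : size (V u'.+1) = (size (vs_ s)).+1 by rewrite Ev size_rcons Eu'.
exists s'; split=> //.
  by apply: (tracks_rstep Ts R') => w; rewrite Es' V_comparable.
move=> w lt_sw; rewrite Es' -size_s'; apply/esym/eqP; rewrite -prefixE.
by apply: prefix_of_comparable; rewrite ?V_comparable ?size_s'.
Qed.

(* One step of the ID run: copy the next suffix chosen by IDS while there is
   one, and afterwards refine freely until the loop exits.  The spec is vacuous
   outside [tracks], so that every state has a successor. *)
Definition id_next_spec (s s' : state Sigma) : Prop :=
  tracks s -> [/\ tracks s', rstep L s s' \/ (~ rcond s /\ s' = s) &
    forall u, size (vs_ s) < size (V u) -> vs_ s' = take (size (vs_ s)).+1 (V u)].

Lemma exists_id_next s : exists s', id_next_spec s s'.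
Proof.
have [Ts|] := classic (tracks s); last by exists s.
have [[u lt_su]|short] := classic (exists u, size (vs_ s) < size (V u)).
  have [s' [R Ts' follow]] := follow_ids Ts lt_su.
  by exists s' => _; split=> //; left.
have no_longer u : size (vs_ s) < size (V u) -> False by move=> ?; apply: short; exists u.
have [Cs _ cmp] := Ts.
have [|halt] := classic (rcond s); last first.
  by exists s => _; split=> //; [right|move=> u /no_longer].
case/(rcond_splits Cs) => a [c [b [g Sp]]].
have R : rstep L s (refine L s (b :: g)).
  by apply/(rstep_splits _ Cs); exists a, c, b, g.
exists (refine L s (b :: g)) => _; split; [|by left|by move=> u /no_longer].
apply: tracks_rstep Ts R _ => u; apply/orP; right.
apply: prefix_trans (prefix_rcons _ (b :: g)).
by apply: prefix_of_comparable; rewrite 1?orbC ?cmp // leqNgt; apply/negP/no_longer.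
Qed.

Definition id_next (s : state Sigma) : state Sigma :=
  proj1_sig (constructive_indefinite_description _ (exists_id_next s)).

Lemma id_nextP s : id_next_spec s (id_next s).
Proof. exact: proj2_sig (constructive_indefinite_description _ (exists_id_next s)). Qed.

Definition tau (t : nat) : state Sigma := iter t id_next (id_init L ([::] :: S)).

Lemma tracks_tau t : tracks (tau t).
Proof.
elim: t => [|t IH]; last by have [] := id_nextP IH.
split=> //; first exact: coherent_id_init.
by move=> u; rewrite /= -V0 prefix_V.
Qed.

Lemma tau_exec : ID_exec L ([::] :: S) tau.
Proof. by split=> // t; have [] := id_nextP (tracks_tau t). Qed.

Lemma tau_covers u n : n < size (V u) -> exists t, vs_ (tau t) = take n.+1 (V u).
Proof.
elim: n => [|n IH] lt_nu.
  by exists 0; move: (prefix_V (leq0n u)); rewrite V0 prefixE => /eqP.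
have [t Et] := IH (ltnW lt_nu); exists t.+1.
have [_ _ follow] := id_nextP (tracks_tau t).
by rewrite /= (follow u) Et ?size_takel // ltnW.
Qed.

Lemma tau_reaches t : exists t', i_ (tau t') = i_ (sigma t) /\ vs_ (tau t') = V t.
Proof.
have [[size_vs _ _ _ _] _] := sigma_invariant t.
have [t' Et'] : exists t', vs_ (tau t') = take (i_ (sigma t)).+1 (V t).
  by apply: tau_covers; rewrite size_vs.
have [[size_vs' _ _ _ _] _ _] := tracks_tau t'.
rewrite -size_vs take_size in Et'; exists t'; split=> //.
by apply/eqP; rewrite -eqSS -size_vs' Et' size_vs.
Qed.

End IDSRun.

Theorem mainTheorem3 (Sigma : finType) (A : dfa Sigma) (S : seq (seq Sigma)) :
  S != [::] ->
  forall sigma : nat -> state Sigma,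
    IDS_exec (accepts A) S sigma ->
    exists tau : nat -> state Sigma,
      ID_exec (accepts A) ([::] :: S) tau /\
      forall m : nat,
        (* (i) *)
        (forall n : nat, Kis sigma n m ->
           forall t, i_ (sigma t) = n -> k_ (sigma t) = m ->
             [/\ (* (a) *)
                 (exists t', i_ (tau t') = n /\
                    forall j, j <= n ->
                      nth [::] (vs_ (sigma t)) j = nth [::] (vs_ (tau t')) j),
                 (* (b) *)
                 (forall j, j < n ->
                      nth [::] (vs_ (sigma t)) n != nth [::] (vs_ (sigma t)) j) &
                 (* (c) *)
                 (forall a, a \in T_ (sigma t) ->
                      E_ (sigma t) a =i accV (accepts A) (vs_ (sigma t)) n a)]) /\
        (* (ii) *)
        (0 < m -> forall p : nat,
           Kis sigma p m.-1 -> (forall p', Kis sigma p' m.-1 -> p' <= p) ->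
           forall t, i_ (sigma t) = p -> k_ (sigma t) = m ->
             forall a, a \in T_ (sigma t) ->
               E_ (sigma t) a =i accV (accepts A) (vs_ (sigma t)) p a) /\
        (* (iii) *)
        ((exists t, k_ (sigma t) = m) ->
           exists t, k_ (sigma t) = m /\ ~ rcond (sigma t)).
Proof.
move=> _ sigma exec; exists (tau exec); split; first exact: tau_exec.
move=> m; split; last split; last exact: (refinement_terminates (m := m) exec).
- move=> n _ t <- _; have Ct := (sigma_invariant exec t).1.
  split; [|exact: coherent_nth_neq Ct|exact: coherent_accV Ct].
  have [t' [Ei Ev]] := tau_reaches exec t.
  by exists t'; split=> // j _; rewrite Ev.
- by move=> _ p _ _ t <- _; apply: coherent_accV (sigma_invariant exec t).1.
Qed.
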